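(* Let $G$ be a regular simple graph on $n$ vertices that is isomorphic neither to the empty graph $E_n$ (no edges) nor to the complete graph $K_n$. Then for every integer $k$ with $2\le k\le n-2$, the token graph $F_k(G)$ is non-regular.
   Context: For a simple graph $G=(V,E)$ on $n$ vertices and an integer $1\le k<n$, the $k$-token graph $F_k(G)$ is the graph whose vertices are all $k$-element subsets of $V$, two such subsets $A,B$ being adjacent whenever their symmetric difference $A\triangle B$ is a pair $\{a,b\}$ with $a$ adjacent to $b$ in $G$. *)

From mathcomp Require Import all_boot.
Set Implicit Arguments. Unset Strict Implicit. Unset Printing Implicit Defensive.

Definition simple_graph (T : finType) (e : rel T) : Prop :=
  symmetric e /\ irreflexive e.

Definition nbhd (T : finType) (e : rel T) (x : T) : {set T} := [set y | e x y].
Definition regular (T : finType) (e : rel T) : Prop :=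
  exists d : nat, forall x : T, #|nbhd e x| = d.

Definition is_empty_graph (T : finType) (e : rel T) : Prop :=
  forall x y : T, ~~ e x y.
Definition is_complete_graph (T : finType) (e : rel T) : Prop :=
  forall x y : T, x != y -> e x y.

Definition symdiff (T : finType) (A B : {set T}) : {set T} :=
  (A :\: B) :|: (B :\: A).

Definition token_adj (T : finType) (e : rel T) (A B : {set T}) : bool :=
  [exists a : T, exists b : T, e a b && (symdiff A B == [set a; b])].

Definition token_vertices (T : finType) (k : nat) : {set {set T}} :=
  [set A : {set T} | #|A| == k].

Definition token_deg (T : finType) (e : rel T) (k : nat) (A : {set T}) : nat :=
  #|[set B in token_vertices T k | token_adj e A B]|.

Definition token_regular (T : finType) (e : rel T) (k : nat) : Prop :=
  exists d : nat, forall A : {set T}, A \in token_vertices T k -> token_deg e k A = d.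

From mathcomp Require Import all_boot zify.
Set Implicit Arguments. Unset Strict Implicit. Unset Printing Implicit Defensive.

(* The neighbours of a k-set A in F_k(G) are the sets obtained by moving one token along an
   edge leaving A, so the degree of A is the number of edges of G between A and its
   complement. For G d-regular and x outside C this number is d + |∂C| - 2 |N(x) ∩ C| for
   A = x ∪ C, hence if F_k(G) is regular, any two vertices outside a (k-1)-set C have the
   same number of neighbours in C. Take a non-edge uw and an edge uv, and for r ≠ v, w a
   (k-2)-set D avoiding u, v, w, r: comparing v with w on u ∪ D and on r ∪ D shows that r
   is adjacent to v but not to w. So deg v ≥ n - 2 > 1 ≥ deg w, contradicting regularity. *)

Section TokenGraph.
Variables (T : finType) (e : rel T).
Implicit Types (A B C D S : {set T}) (p : T * T).

Lemma exists_subset_card S m :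
  m <= #|S| -> exists2 D : {set T}, D \subset S & #|D| = m.
Proof.
case/card_geqP=> s [s_uniq s_size sS]; exists [set x in s].
  by apply/subsetP=> x; rewrite inE => /sS.
by rewrite cardsE (card_uniqP s_uniq).
Qed.

Definition move_token (A : {set T}) (p : T * T) : {set T} := p.2 |: A :\ p.1.

Lemma move_tokenDl A p : p.1 \in A -> p.2 \notin A -> A :\: move_token A p = [set p.1].
Proof.
move=> p1A p2A; apply/setP=> z; rewrite !inE.
case: (eqVneq z p.1) => [->|_] /=; last by case: (z \in A); rewrite ?orbT ?andbF.
by rewrite p1A andbT orbF; apply: contraNneq p2A => <-.
Qed.

Lemma move_tokenDr A p : p.2 \notin A -> move_token A p :\: A = [set p.2].
Proof.
move=> p2A; apply/setP=> z; rewrite !inE.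
case: (eqVneq z p.2) => [->|_] /=; first by rewrite p2A.
by case: (z \in A); rewrite ?andbF.
Qed.

Lemma setD_set1_move_token A B a b :
  A :\: B = [set a] -> B :\: A = [set b] -> B = move_token A (a, b).
Proof.
move=> /setP AB /setP BA; apply/setP=> z; move: (AB z) (BA z); rewrite !inE /=.
by case: (z \in A); case: (z \in B) => /= <- <-.
Qed.

Lemma card_setD_sym A B : #|A| = #|B| -> #|A :\: B| = #|B :\: A|.
Proof. by move=> AB; rewrite !cardsD AB setIC. Qed.

Lemma card_move_token A p : p.1 \in A -> p.2 \notin A -> #|move_token A p| = #|A|.
Proof.
by move=> p1A p2A; rewrite cardsU1 in_setD1 (negbTE p2A) andbF (cardsD1 p.1 A) p1A.
Qed.

Lemma symdiff_move_token A p :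
  p.1 \in A -> p.2 \notin A -> symdiff A (move_token A p) = [set p.1; p.2].
Proof. by move=> p1A p2A; rewrite /symdiff move_tokenDl // move_tokenDr. Qed.

Lemma not_complete_nonedge : ~ is_complete_graph e -> exists u w, u != w /\ ~~ e u w.
Proof.
move=> not_complete.
case: (pickP (fun p : T * T => (p.1 != p.2) && ~~ e p.1 p.2)) => [[u w] /andP [] | no_nonedge].
  by exists u, w.
by case: not_complete => u w uw; move: (no_nonedge (u, w)); rewrite /= uw => /negbFE.
Qed.

Hypotheses (e_sym : symmetric e) (e_irr : irreflexive e).

Definition edge_boundary A : {set T * T} :=
  [set p | [&& p.1 \in A, p.2 \notin A & e p.1 p.2]].

Lemma token_adj_move_token A p : p \in edge_boundary A -> token_adj e A (move_token A p).
Proof.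
rewrite inE => /and3P [p1A p2A ep].
by apply/existsP; exists p.1; apply/existsP; exists p.2; rewrite ep symdiff_move_token ?eqxx.
Qed.

Lemma token_adj_move_tokenP A B :
  #|A| = #|B| -> token_adj e A B -> exists2 p, p \in edge_boundary A & B = move_token A p.
Proof.
move=> AB /existsP [a /existsP [b /andP [eab /eqP sdAB]]].
have ab : a != b by apply: contraTneq eab => ->; rewrite e_irr.
have card_sd : #|A :\: B| + #|B :\: A| = 2.
  rewrite -cardsUI -/(symdiff A B) sdAB cards2 ab.
  suff -> : (A :\: B) :&: (B :\: A) = set0 by rewrite cards0.
  by apply/setP=> z; rewrite !inE; case: (z \in A); case: (z \in B).
have card_BA : #|B :\: A| = 1 by move: card_sd; rewrite (card_setD_sym AB); lia.
have /eqP/cards1P [a' Ha'] : #|A :\: B| = 1 by rewrite (card_setD_sym AB).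
have /eqP/cards1P [b' Hb'] := card_BA.
have /setDP [a'A a'B] : a' \in A :\: B by rewrite Ha' set11.
have /setDP [b'B b'A] : b' \in B :\: A by rewrite Hb' set11.
exists (a', b'); last exact: setD_set1_move_token.
rewrite inE /= a'A b'A /=.
have : [set a'; b'] = [set a; b] by rewrite -sdAB /symdiff Ha' Hb'.
have a'b' : a' != b' by apply: contraTneq a'A => ->.
move=> /setP sets; have := sets a'; have := sets b'; rewrite !inE !eqxx ?orbT /=.
move=> /esym/orP[]/eqP ? /esym/orP[]/eqP ?; subst a' b'; rewrite ?eqxx // in a'b'.
by rewrite e_sym.
Qed.

Lemma token_deg_edge_boundary k A : #|A| = k -> token_deg e k A = #|edge_boundary A|.
Proof.
move=> cardA; rewrite /token_deg.
have -> : [set B in token_vertices T k | token_adj e A B] = move_token A @: edge_boundary A.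
  apply/setP=> B; rewrite !inE; apply/andP/imsetP => [[/eqP cardB adjB] | [p pA ->]].
    by apply: token_adj_move_tokenP adjB; rewrite cardA cardB.
  have := pA; rewrite inE => /and3P [p1A p2A _].
  by rewrite card_move_token // cardA eqxx token_adj_move_token.
rewrite card_in_imset // => p q; rewrite !inE => /and3P [p1A p2A _] /and3P [q1A q2A _] pq.
have /set1_inj p1q1 : [set p.1] = [set q.1].
  by rewrite -(move_tokenDl p1A p2A) -(move_tokenDl q1A q2A) pq.
have /set1_inj p2q2 : [set p.2] = [set q.2].
  by rewrite -(move_tokenDr p2A) -(move_tokenDr q2A) pq.
by case: p q p1q1 p2q2 {p1A p2A q1A q2A pq} => [? ?] [? ?] /= -> ->.
Qed.

Definition deg_in x C : nat := \sum_(c in C) (e x c : nat).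

Lemma card_nbhd x : #|nbhd e x| = deg_in x [set: T].
Proof.
rewrite /deg_in -sum1_card big_mkcond [RHS]big_mkcond /=.
by apply: eq_bigr => y _; rewrite !inE; case: (e x y).
Qed.

Lemma deg_in_setC x C : deg_in x [set: T] = deg_in x C + deg_in x (~: C).
Proof. by rewrite /deg_in (big_setID C) setTI setTD. Qed.

Lemma card_edge_boundary A : #|edge_boundary A| = \sum_(a in A) deg_in a (~: A).
Proof.
rewrite -sum1_card /deg_in.
rewrite (eq_bigr (fun a => \sum_(b in ~: A | e a b) 1)) => [|a _]; last first.
  by rewrite big_mkcondr.
by rewrite pair_big_dep /=; apply: eq_bigl => -[a b]; rewrite !inE.
Qed.

Section Regular.
Variable d : nat.
Hypothesis e_reg : forall x, #|nbhd e x| = d.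

Lemma card_edge_boundary_setU1 x C : x \notin C ->
  #|edge_boundary (x |: C)| + 2 * deg_in x C = d + #|edge_boundary C|.
Proof.
move=> xC; rewrite !card_edge_boundary big_setU1 //=.
have deg_setCU1 a : deg_in a (~: C) = e a x + deg_in a (~: (x |: C)).
  rewrite /deg_in (bigD1 x) /=; last by rewrite inE.
  by congr (_ + _); apply: eq_bigl => b; rewrite !inE negb_or andbC.
have deg_x : d = deg_in x C + deg_in x (~: (x |: C)).
  by rewrite -(e_reg x) card_nbhd (deg_in_setC x C) deg_setCU1 e_irr.
have sum_C : \sum_(a in C) deg_in a (~: C) =
             deg_in x C + \sum_(a in C) deg_in a (~: (x |: C)).
  rewrite [deg_in x C]/deg_in -big_split /=; apply: eq_bigr => a _.
  by rewrite deg_setCU1 e_sym.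
lia.
Qed.

Lemma regular_nonempty_nbhd : ~ is_empty_graph e -> forall x, exists y, e x y.
Proof.
move=> not_empty x; have [y [z eyz]] : exists y z, e y z.
  case: (pickP (fun p : T * T => e p.1 p.2)) => [[y z] eyz | no_edge]; first by exists y, z.
  by case: not_empty => y z; rewrite (no_edge (y, z)).
have : 0 < #|nbhd e x| by rewrite e_reg -(e_reg y) card_gt0; apply/set0Pn; exists z; rewrite inE.
by rewrite card_gt0 => /set0Pn [y' ]; rewrite inE; exists y'.
Qed.

Lemma regular_nbhd_not_split v w : v != w -> 4 <= #|T| ->
  ~ (forall r, r != v -> r != w -> e v r && ~~ e w r).
Proof.
move=> vw n_ge4 split_vw.
have : #|~: [set v; w]| <= #|nbhd e v|.
  apply/subset_leq_card/subsetP => r; rewrite !inE negb_or => /andP [rv rw].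
  by case/andP: (split_vw r rv rw).
have : #|nbhd e w| <= #|[set v]|.
  apply/subset_leq_card/subsetP => r; rewrite !inE => ewr; apply: contraTT ewr => rv.
  have [-> | rw] := eqVneq r w; first by rewrite e_irr.
  by case/andP: (split_vw r rv rw).
have := cardsC [set v; w]; rewrite cards2 vw cards1 !e_reg; lia.
Qed.

Section TokenRegular.
Variable k : nat.
Hypotheses (k_ge2 : 2 <= k) (k_le : k <= #|T| - 2) (token_reg : token_regular e k).

Lemma token_regular_deg_in C x y : #|C| = k.-1 -> x \notin C -> y \notin C ->
  deg_in x C = deg_in y C.
Proof.
move=> cardC xC yC; have [K degK] := token_reg.
have card_U1 z : z \notin C -> #|z |: C| = k by move=> zC; rewrite cardsU1 zC cardC; lia.
have deg_U1 z : z \notin C -> #|edge_boundary (z |: C)| = K.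
  move=> zC; rewrite -(token_deg_edge_boundary (card_U1 z zC)).
  by apply: degK; rewrite inE card_U1.
have := card_edge_boundary_setU1 xC; have := card_edge_boundary_setU1 yC.
rewrite !deg_U1 //; lia.
Qed.

Lemma token_regular_deg_inU1 D v w r : #|D| = k.-2 ->
  v \notin D -> w \notin D -> r \notin D -> r != v -> r != w ->
  (e v r : nat) + deg_in v D = e w r + deg_in w D.
Proof.
move=> cardD vD wD rD rv rw.
have := @token_regular_deg_in (r |: D) v w.
rewrite /deg_in !big_setU1 //= !inE !negb_or ![_ == r]eq_sym rv rw vD wD; apply=> //.
rewrite cardsU1 rD cardD; lia.
Qed.

Lemma token_regular_nbhd_split u v w : u != w -> e u v -> ~~ e u w ->
  forall r, r != v -> r != w -> e v r && ~~ e w r.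
Proof.
move=> uw euv neuw r rv rw.
have [D DS cardD] : exists2 D : {set T}, D \subset ~: [set u; v; w; r] & #|D| = k.-2.
  apply: exists_subset_card.
  have : #|[set u; v; w; r]| <= 4 by rewrite !cardsU !cards1; lia.
  have := cardsC [set u; v; w; r]; lia.
have notD z : z \in [set u; v; w; r] -> z \notin D.
  by move=> zF; apply/negP => /(subsetP DS); rewrite inE zF.
have uv : u != v by apply: contraTneq euv => ->; rewrite e_irr.
have [uD vD wD rD] : [/\ u \notin D, v \notin D, w \notin D & r \notin D].
  by split; apply: notD; rewrite !inE eqxx ?orbT.
have := token_regular_deg_inU1 cardD vD wD uD uv uw.
have := token_regular_deg_inU1 cardD vD wD rD rv rw.
rewrite (e_sym v u) euv (e_sym w u) (negbTE neuw).
by case: (e v r); case: (e w r); move: (deg_in v D) (deg_in w D) => /= Nv Nw; clear; lia.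
Qed.
End TokenRegular.
End Regular.
End TokenGraph.

Theorem theorem3 (T : finType) (e : rel T) :
  simple_graph e -> regular e ->
  ~ is_empty_graph e -> ~ is_complete_graph e ->
  forall k : nat, 2 <= k -> k <= #|T| - 2 ->
  ~ token_regular e k.
Proof.
move=> [e_sym e_irr] [d e_reg] not_empty not_complete k k_ge2 k_le token_reg.
have [u [w [uw neuw]]] := not_complete_nonedge not_complete.
have [v euv] := regular_nonempty_nbhd e_reg not_empty u.
have vw : v != w by apply: contraTneq euv => ->.
have n_ge4 : 4 <= #|T| by move: k_ge2 k_le; clear; lia.
apply: (regular_nbhd_not_split e_irr e_reg vw n_ge4).
exact: (token_regular_nbhd_split e_sym e_irr e_reg k_ge2 k_le token_reg uw euv neuw).
Qed.
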